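(* Let $X$ be a Hausdorff topological space and $\Phi$ a local semiflow on $X$. Let $M\subset X$ be a closed strongly admissible set, and let $\gamma_n$ be a sequence of solutions contained in $M$, each $\gamma_n$ defined on $[-t_n,t_n]$, with $t_n\to\infty$. Then there exist a subsequence $\gamma_{n_k}$ and a full solution $\gamma$ contained in $M$ such that for every compact interval $J\subset\mathbb R$ and every neighborhood $\mathcal V$ of $\mathcal T_\gamma(J)$ in $J\times X$, there exists $k_0$ with $\mathcal T_{\gamma_{n_k}}(J)\subset\mathcal V$ for all $k>k_0$.
   Context: A local semiflow $\Phi$ on $X$ is a continuous map from an open subset $\mathcal D_\Phi\subset\mathbb R^+\times X$ to $X$ such that: (i) for each $x\in X$ there is $T_x\in(0,\infty]$ with $(t,x)\in\mathcal D_\Phi$ iff $t\in[0,T_x)$; (ii) $\Phi(0,x)=x$; (iii) if $(t+s,x)\in\mathcal D_\Phi$ with $t,s\ge0$, then $\Phi(t+s,x)=\Phi(t,\Phi(s,x))$. Write $\Phi(t)x=\Phi(t,x)$, and for $M\subset X$, $J\subset\mathbb R^+$, $\Phi(J)M=\{\Phi(t)x: x\in M,\ t\in J\cap[0,T_x)\}$. A solution on an interval $I\subset\mathbb R$ is a map $\gamma:I\to X$ with $\gamma(t)=\Phi(t-s)\gamma(s)$ for all $s\le t$ in $I$; a full solution is a solution on $\mathbb R$. Its trace on $I$ is $\mathcal T_\gamma(I)=\{(t,\gamma(t)):t\in I\}$. $\Phi$ does not explode in $M$ if $T_x=\infty$ whenever $\Phi([0,T_x))x\subset M$. $M$ is admissible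 if for any sequences $x_n\in M$ and $t_n\to\infty$ with $\Phi([0,t_n])x_n\subset M$ for all $n$, the sequence $\Phi(t_n)x_n$ has a convergent subsequence (in $X$); $M$ is strongly admissible if it is admissible and $\Phi$ does not explode in $M$. Convention: $U$ is a neighborhood of $A$ if $\overline A\subset\mathrm{int}\,U$; $J\times X$ has the product topology. *)

From HB Require Import structures.
From mathcomp Require Import all_boot all_order all_algebra.
From mathcomp Require Import all_classical all_reals all_analysis.
Set Implicit Arguments. Unset Strict Implicit. Unset Printing Implicit Defensive.
Import Order.TTheory GRing.Theory Num.Theory.
Import numFieldNormedType.Exports.
Local Open Scope classical_set_scope.
Local Open Scope ring_scope.

Section LocalSemiflow.
Context {R : realType} {X : topologicalType}.
(* A local semiflow is encoded by the escape-time function T : X -> \bar R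
   (T x = T_x in (0, +oo]) and a total function Phi : R -> X -> X whose values
   are only meaningful on the domain D_Phi = {(t,x) | 0 <= t < T x}. *)
Variables (T : X -> \bar R) (Phi : R -> X -> X).

Definition semiflow_domain : set (R * X) :=
  [set p | 0 <= p.1 /\ (p.1%:E < T p.2)%E].

Definition is_local_semiflow : Prop :=
  (* D_Phi is open in R^+ x X (product topology, subspace of R x X) *)
  (exists U : set (R * X), open U /\
      semiflow_domain = U `&` [set p | 0 <= p.1]) /\
  {within semiflow_domain, continuous (fun p : R * X => Phi p.1 p.2)} /\
  (forall x, (0 < T x)%E) /\
  (forall x, Phi 0 x = x) /\
  (forall x t s, 0 <= t -> 0 <= s -> ((t + s)%:E < T x)%E ->
     (t%:E < T (Phi s x))%E /\ Phi (t + s) x = Phi t (Phi s x)).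

Definition orbit_img (J : set R) (x : X) : set X :=
  [set Phi t x | t in J `&` [set t | 0 <= t /\ (t%:E < T x)%E]].

Definition is_solution (I : set R) (g : R -> X) : Prop :=
  forall s t, I s -> I t -> s <= t ->
    ((t - s)%:E < T (g s))%E /\ g t = Phi (t - s) (g s).

Definition no_explosion_in (M : set X) : Prop :=
  forall x, orbit_img [set t | 0 <= t] x `<=` M -> T x = +oo%E.

Definition admissible (M : set X) : Prop :=
  forall (x : nat -> X) (t : nat -> R),
    (forall n, M (x n)) -> t @ \oo --> +oo ->
    (forall n, orbit_img [set s | 0 <= s <= t n] (x n) `<=` M) ->
    (forall n, ((t n)%:E < T (x n))%E) ->
    exists (phi : nat -> nat) (y : X),
      (forall m n, (m < n)%N -> (phi m < phi n)%N) /\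
      (fun k => Phi (t (phi k)) (x (phi k))) @ \oo --> y.

Definition strongly_admissible (M : set X) : Prop :=
  admissible M /\ no_explosion_in M.

End LocalSemiflow.

Definition trace {R : realType} {X : Type} (g : R -> X) (I : set R) : set (R * X) :=
  [set p | I p.1 /\ p.2 = g p.1].

(* V is a neighborhood of A in the subspace S of the topological space Y:
   the closure of A relative to S is contained in the interior of V relative to S *)
Definition nbhd_in {Y : topologicalType} (S A V : set Y) : Prop :=
  forall p, (closure A `&` S) p ->
    exists O : set Y, open O /\ O p /\ O `&` S `<=` V.

From HB Require Import structures.
From mathcomp Require Import all_boot all_order all_algebra.
From mathcomp Require Import all_classical all_reals all_analysis.
From mathcomp Require Import lra zify.
Import Order.TTheory GRing.Theory Num.Theory.
Import numFieldNormedType.Exports.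
Local Open Scope classical_set_scope.
Local Open Scope ring_scope.

(* Idea: for every m, admissibility gives a subsequence along which gam_n(-m)
   converges; a diagonal subsequence gam_(phi k) makes gam_(phi k)(-m) converge
   to some y_m for all m at once.  Since M is closed and Phi(t) is continuous,
   the forward orbits of the y_m stay in M, so they never escape, and uniqueness
   of limits gives Phi(d) y_(m+d) = y_m.  Hence g(s) := Phi(s+m) y_m does not
   depend on m >= -s and is a full solution in M.  Continuity of Phi on its
   open domain makes gam_(phi k)(s') converge to g(s) jointly as s' -> s and
   k -> oo, and compactness of [a, b] turns this into eventual inclusion of the
   traces in any neighbourhood of the trace of g. *)

Lemma add_truncnS_opp_gt0 {R : realType} (s : R) : 0 < s + (Num.truncn (- s)).+1%:R.
Proof. by have := truncnS_gt (- s); lra. Qed.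

Lemma homo_ltn_geq {f : nat -> nat} : {homo f : m n / (m < n)%N} ->
  forall n, (n <= f n)%N.
Proof. by move=> f_incr; elim=> [//|n IHn]; exact: leq_ltn_trans IHn (f_incr _ _ _). Qed.

Lemma homo_ltn_cvg {f : nat -> nat} : {homo f : m n / (m < n)%N} ->
  f @ \oo --> \oo.
Proof.
move=> f_incr P [N _ NP]; exists N => // n /= Nn.
exact/NP/(leq_trans Nn)/homo_ltn_geq.
Qed.

Lemma cvgry_subseq_ge {R : realType} {u : nat -> R} : u @ \oo --> +oo ->
  exists2 th : nat -> nat, {homo th : m n / (m < n)%N} &
    forall n, n%:R <= u (th n).
Proof.
move=> /cvgryPge u_oo.
have [f fP] : {f : nat -> nat & forall n j, (f n <= j)%N -> n%:R <= u j}.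
  apply: (choice (P := fun n N => forall j, (N <= j)%N -> n%:R <= u j)) => n.
  by have [N _ NP] := u_oo n%:R; exists N => j /NP.
exists (fun n => \sum_(i < n.+1) f i + n)%N => [|n].
  apply: (homo_ltn ltn_trans) => n /=.
  by rewrite [in X in (_ < X)%N]big_ord_recr /=; lia.
by apply: fP; rewrite big_ord_recr /=; lia.
Qed.

Lemma diagonal_extraction {Y : topologicalType} (P : (nat -> nat) -> Prop)
    (u : nat -> nat -> Y) {th : nat -> nat} :
  P th ->
  (forall psi, P psi -> {homo psi : m n / (m < n)%N}) ->
  (forall psi sub, P psi -> {homo sub : m n / (m < n)%N} -> P (psi \o sub)) ->
  (forall m psi, P psi -> exists2 sub : nat -> nat,
     {homo sub : i j / (i < j)%N} & exists y : Y, u m (psi (sub k)) @[k --> \oo] --> y) ->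
  exists2 phi : nat -> nat, {homo phi : m n / (m < n)%N} &
    exists y : nat -> Y, forall m, u m (phi k) @[k --> \oo] --> y m.
Proof.
move=> Pth P_incr P_comp extract.
have [_ _ [y0 _]] := extract 0%N th Pth.
pose Ext m psi (r : (nat -> nat) * Y) := P psi ->
  {homo r.1 : i j / (i < j)%N} /\ (u m (psi (r.1 k)) @[k --> \oo] --> r.2).
have [G GP] : {G : nat -> (nat -> nat) -> (nat -> nat) * Y &
    forall m psi, Ext m psi (G m psi)}.
  apply: (choice (P := fun m g => forall psi, Ext m psi (g psi))) => m.
  suff [g gP] : {g : (nat -> nat) -> (nat -> nat) * Y & forall psi, Ext m psi (g psi)}.
    by exists g.
  apply: choice => psi.
  have [/(extract m) [sub sub_incr [y yP]]|nP] := pselect (P psi).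
    by exists (sub, y).
  by exists (id, y0).
pose ps := fix ps m := if m is k.+1 then ps k \o (G k (ps k)).1 else th.
have Pps m : P (ps m).
  by elim: m => [//|m IHm]; apply: P_comp => //; exact: (GP m _ IHm).1.
have ps_tail m d j : exists2 i, (j <= i)%N & ps (m + d)%N j = ps m i.
  elim: d j => [|d IHd] j; first by exists j; rewrite ?addn0.
  rewrite addnS /=; have [i ji ->] := IHd ((G (m + d) (ps (m + d))).1 j)%N.
  exists i => //.
  exact/(leq_trans _ ji)/homo_ltn_geq/(GP _ _ (Pps _)).1.
exists (fun k => ps k k).
  apply: (homo_ltn ltn_trans) => k /=; apply: (P_incr _ (Pps k)).
  exact/homo_ltn_geq/(GP _ _ (Pps _)).1.
exists (fun m => (G m (ps m)).2) => m B /(GP m _ (Pps m)).2 [N _ NB].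
exists (maxn N m.+1) => // k /= /[!geq_max] /andP[Nk mk].
have := ps_tail m.+1 (k - m.+1)%N k; rewrite subnKC // => -[i ki ->].
exact/NB/(leq_trans Nk).
Qed.

Section SemiflowTheory.
Context {R : realType} {X : topologicalType} {T : X -> \bar R} {Phi : R -> X -> X}.
Hypothesis flow : is_local_semiflow T Phi.

Lemma semiflow_T_gt0 x : (0 < T x)%E.
Proof. by case: flow => _ [_ []]. Qed.

Lemma semiflow_comp_global {x : X} {t s : R} : T x = +oo%E -> 0 <= t -> 0 <= s ->
  (t%:E < T (Phi s x))%E /\ Phi (t + s) x = Phi t (Phi s x).
Proof. by move=> Tx t0 s0; case: flow => _ [_ [_ [_]]]; apply => //; rewrite Tx ltry. Qed.

Lemma semiflow_cvg {I : Type} {F : set_system I} {FF : Filter F}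
    {tt : I -> R} {x : I -> X} {t : R} {y : X} :
  semiflow_domain T (t, y) -> tt @ F --> t -> x @ F --> y ->
  (\forall i \near F, 0 <= tt i) ->
  Phi (tt i) (x i) @[i --> F] --> Phi t y.
Proof.
move=> Dty tt_t x_y tt_ge0.
case: flow => -[U [oU DU]] [/subspace_continuousP /(_ _ Dty) Phi_cont _].
have pair_cvg : (tt i, x i) @[i --> F] --> (t, y) by exact: (cvg_pair tt_t x_y).
have D_ev : \forall i \near F, semiflow_domain T (tt i, x i).
  have Uty : U (t, y) by move: Dty; rewrite DU => -[].
  have U_ev : \forall i \near F, U (tt i, x i).
    exact: pair_cvg (open_nbhs_nbhs (conj oU Uty)).
  by apply: (filterS2 _ _ U_ev tt_ge0) => i; rewrite DU.
apply: cvg_trans Phi_cont => A /pair_cvg A_ev.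
by apply: (filterS2 _ _ D_ev A_ev) => i Di; apply.
Qed.

End SemiflowTheory.

Definition exhausting_subseq {R : realType} (tn : nat -> R) (psi : nat -> nat) :=
  {homo psi : m n / (m < n)%N} /\ forall n, n%:R <= tn (psi n).

Lemma exhausting_subseq_comp {R : realType} (tn : nat -> R) psi sub :
  exhausting_subseq tn psi -> {homo sub : m n / (m < n)%N} ->
  exhausting_subseq tn (psi \o sub).
Proof.
move=> [psi_incr psi_tn] sub_incr; split => [m n mn|n]; first exact/psi_incr/sub_incr.
by apply: le_trans (psi_tn (sub n)); rewrite ler_nat homo_ltn_geq.
Qed.

Definition limit_solution {R : realType} {X : Type} (Phi : R -> X -> X)
    (y : nat -> X) (s : R) : X :=
  let m := (Num.truncn (- s)).+1 in Phi (s + m%:R) (y m).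

Section SolutionSequences.
Context {R : realType} {X : topologicalType} {T : X -> \bar R} {Phi : R -> X -> X}.
Context {M : set X} {gam : nat -> R -> X} {tn : nat -> R}.
Hypotheses (flow : is_local_semiflow T Phi)
  (gam_sol : forall n, is_solution T Phi [set s | - tn n <= s <= tn n] (gam n))
  (gam_M : forall n s, - tn n <= s <= tn n -> M (gam n s)).

Lemma gam_flow n s u : - tn n <= s -> s <= u -> u <= tn n ->
  ((u - s)%:E < T (gam n s))%E /\ gam n u = Phi (u - s) (gam n s).
Proof. by move=> tn_s su u_tn; apply: gam_sol => //=; apply/andP; split; lra. Qed.

Lemma gam_in_M n s : - tn n <= s -> s <= tn n -> M (gam n s).
Proof. by move=> tn_s s_tn; apply: gam_M; apply/andP. Qed.

Lemma solutions_subseq_cvg : admissible T Phi M ->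
  forall (m : nat) psi, exhausting_subseq tn psi ->
  exists2 sub : nat -> nat, {homo sub : i j / (i < j)%N} &
    exists y : X, gam (psi (sub k)) (- m%:R) @[k --> \oo] --> y.
Proof.
move=> admM m psi [_ psi_tn].
pose x n := gam (psi n) (- n%:R).
pose t n := n%:R - m%:R : R.
have [|||n|sub [y [sub_incr x_y]]] := admM x t.
- by move=> n; apply: gam_in_M; have := psi_tn n; have := ler0n R n; lra.
- apply/cvgryPge => A; have /cvgryPge/(_ (A + m%:R)) := @cvgr_idn R.
  by apply: filterS => n /=; rewrite /t; lra.
- move=> n _ [s [/andP[s0 s_t] _] <-].
  have := psi_tn n; have := ler0n R m; rewrite /t in s_t => m0 n_tn.
  have [|||_] := gam_flow (psi n) (- n%:R) (- n%:R + s); [lra|lra|lra|].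
  by rewrite (addrC (- n%:R)) addrK => <-; apply: gam_in_M; lra.
- case: (leqP m n) => [mn|nm].
    have := psi_tn n; have := ler0n R m; rewrite -(ler_nat R) in mn => m0 n_tn.
    have [|||] := gam_flow (psi n) (- n%:R) (- m%:R); [lra|lra|lra|].
    by rewrite opprK addrC.
  apply: (lt_trans _ (semiflow_T_gt0 flow (x n))).
  by rewrite lte_fin /t subr_lt0 ltr_nat.
exists sub => //; exists y; apply: cvg_trans x_y; apply: near_eq_cvg.
near=> k.
have mk : m%:R <= (sub k)%:R :> R.
  rewrite ler_nat (leq_trans _ (homo_ltn_geq sub_incr k)) //.
  by near: k; exact: nbhs_infty_ge.
have := psi_tn (sub k); have := ler0n R m => m0 sub_tn.
have [|||_ ->] := gam_flow (psi (sub k)) (- (sub k)%:R) (- m%:R); [lra|lra|lra|].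
by rewrite opprK addrC.
Unshelve. all: by end_near. Qed.

Section LimitSolution.
Hypotheses (hausX : hausdorff_space X) (closedM : closed M)
  (noexpM : no_explosion_in T Phi M) (tn_oo : tn @ \oo --> +oo).
Context {phi : nat -> nat} {y : nat -> X}.
Hypotheses (phi_incr : {homo phi : m n / (m < n)%N})
  (gam_phi_cvg : forall m : nat, gam (phi k) (- m%:R) @[k --> \oo] --> y m).

Lemma tn_phi_ge (A : R) : \forall k \near \oo, A <= tn (phi k).
Proof. by move: A; apply/cvgryPge/(cvg_comp _ _ (homo_ltn_cvg phi_incr) tn_oo). Qed.

Lemma flow_gam_phi m t : 0 <= t ->
  \forall k \near \oo, Phi t (gam (phi k) (- m%:R)) = gam (phi k) (t - m%:R).
Proof.
move=> t0; near=> k.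
have m_tn : m%:R <= tn (phi k) by near: k; exact: tn_phi_ge.
have t_tn : t - m%:R <= tn (phi k) by near: k; exact: tn_phi_ge.
have [|||_ ->] := gam_flow (phi k) (- m%:R) (t - m%:R); [lra|lra|lra|].
by rewrite opprK subrK.
Unshelve. all: by end_near. Qed.

Lemma limit_orbit_in_M m t : 0 <= t -> (t%:E < T (y m))%E -> M (Phi t (y m)).
Proof.
move=> t0 tT.
have Phi_cvg : Phi t (gam (phi k) (- m%:R)) @[k --> \oo] --> Phi t (y m).
  by apply: (semiflow_cvg flow _ (cvg_cst t) (gam_phi_cvg m)); [split|exact: nearW].
apply: (closed_cvg _ closedM _ _ Phi_cvg).
near=> k.
have -> : Phi t (gam (phi k) (- m%:R)) = gam (phi k) (t - m%:R).
  by near: k; exact: flow_gam_phi.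
have m_tn : m%:R <= tn (phi k) by near: k; exact: tn_phi_ge.
have t_tn : t - m%:R <= tn (phi k) by near: k; exact: tn_phi_ge.
by apply: gam_in_M; lra.
Unshelve. all: by end_near. Qed.

Lemma limit_T_infty m : T (y m) = +oo%E.
Proof. by apply: noexpM => _ [t [t0 [_ tT]] <-]; exact: limit_orbit_in_M. Qed.

Lemma limit_shift m d : Phi d%:R (y (m + d)) = y m.
Proof.
have Phi_cvg :
    Phi d%:R (gam (phi k) (- (m + d)%:R)) @[k --> \oo] --> Phi d%:R (y (m + d)).
  apply: (semiflow_cvg flow _ (cvg_cst _) (gam_phi_cvg _)); last exact: nearW.
  by split; rewrite ?limit_T_infty ?ltry.
apply: (cvg_unique hausX) (gam_phi_cvg m); apply: cvg_trans Phi_cvg.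
apply: near_eq_cvg; apply: filterS (flow_gam_phi (m + d) d%:R (ler0n R d)) => k ->.
by rewrite natrD opprD addrCA subrr addr0.
Qed.

Lemma limit_flow_shift m d s : 0 <= s + m%:R ->
  Phi (s + (m + d)%:R) (y (m + d)) = Phi (s + m%:R) (y m).
Proof.
move=> sm; have [_] := semiflow_comp_global flow (limit_T_infty (m + d)) sm (ler0n R d).
by rewrite limit_shift -addrA -natrD.
Qed.

Lemma limit_solutionE m s :
  0 <= s + m%:R -> limit_solution Phi y s = Phi (s + m%:R) (y m).
Proof.
rewrite /limit_solution => sm; have := ltW (add_truncnS_opp_gt0 s).
set m' := (Num.truncn (- s)).+1 => sm'.
have [m'm|mm'] := leqP m' m.
  by rewrite -(subnKC m'm) limit_flow_shift.
by rewrite -(subnKC (ltnW mm')) limit_flow_shift.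
Qed.

Lemma limit_solution_in_M s : M (limit_solution Phi y s).
Proof.
apply: limit_orbit_in_M; first exact/ltW/add_truncnS_opp_gt0.
by rewrite limit_T_infty ltry.
Qed.

Lemma limit_solution_is_solution : is_solution T Phi setT (limit_solution Phi y).
Proof.
move=> s u _ _ su; have := ltW (add_truncnS_opp_gt0 s).
set m := (Num.truncn (- s)).+1 => sm.
have us : 0 <= u - s by lra.
have [us_T flowE] := semiflow_comp_global flow (limit_T_infty m) us sm.
rewrite (limit_solutionE m s sm) (limit_solutionE m u) -?flowE; last by lra.
by split => //; congr Phi; lra.
Qed.

Lemma gam_phi_cvg_limit s :
  gam (phi p.2) p.1 @[p --> filter_prod (nbhs s) \oo] --> limit_solution Phi y s.
Proof.
have := add_truncnS_opp_gt0 s; set m := (Num.truncn (- s)).+1 => sm.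
rewrite (limit_solutionE m); last exact: ltW.
have m_s : - m%:R < s by lra.
have flow_ev : \forall p \near filter_prod (nbhs s) \oo,
    Phi (p.1 + m%:R) (gam (phi p.2) (- m%:R)) = gam (phi p.2) p.1.
  exists ([set s' | - m%:R < s'] `&` [set s' | s' < s + 1],
          [set k | m%:R <= tn (phi k)] `&` [set k | s + 1 <= tn (phi k)]).
    split; first by apply: filterI; [exact: lt_nbhsr | apply: lt_nbhsl; lra].
    by apply: filterI; exact: tn_phi_ge.
  move=> [s' k] /= [[ms' s's] [m_tn s_tn]].
  have [|||_ ->] := gam_flow (phi k) (- m%:R) s'; [lra|lra|lra|].
  by rewrite opprK.
apply: cvg_trans (near_eq_cvg flow_ev) _.
apply: (semiflow_cvg flow).
- by split; [exact: ltW | rewrite limit_T_infty ltry].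
- by apply: cvgD; [exact: cvg_fst | exact: cvg_cst].
- exact: cvg_comp cvg_snd (gam_phi_cvg m).
- exists ([set s' | - m%:R < s'], setT).
    by split; [exact: lt_nbhsr | exact: filterT].
  by move=> [s' k] /= [ms' _]; lra.
Qed.

Lemma trace_gam_phi_eventually_in (a b : R) (V : set (R * X)) :
  let J := [set s | a <= s <= b] in
  nbhd_in (J `*` setT) (trace (limit_solution Phi y) J) V ->
  exists k0 : nat, forall k, (k0 < k)%N -> trace (gam (phi k)) J `<=` V.
Proof.
move=> J V_nbhd.
have cJ : compact J by rewrite /J -set_itvcc; exact: segment_compact.
suff : \forall k \near \oo, J `<=` fun s => V (s, gam (phi k) s).
  by move=> [N _ NV]; exists N => k Nk [s z] [/= Js ->]; exact: (NV k (ltnW Nk)).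
apply: ((near_covering_withinP J).2 ((compact_near_coveringP J).1 cJ)) => s Js.
have [W [oW [Ws WV]]] : exists W, open W /\ W (s, limit_solution Phi y s) /\
    W `&` (J `*` setT) `<=` V.
  by apply: V_nbhd; split; [exact: subset_closure | split].
have W_ev : \forall p \near filter_prod (nbhs s) \oo, W (p.1, gam (phi p.2) p.1).
  exact: (cvg_pair cvg_fst (gam_phi_cvg_limit s)) (open_nbhs_nbhs (conj oW Ws)).
move: W_ev; apply: filterS => -[s' k] /= Wp Js'.
by apply: WV; split.
Qed.

End LimitSolution.

End SolutionSequences.

Theorem proposition2p8 (R : realType) (X : topologicalType)
  (T : X -> \bar R) (Phi : R -> X -> X) (M : set X)
  (gam : nat -> R -> X) (tn : nat -> R) :
  hausdorff_space X ->
  is_local_semiflow T Phi ->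
  closed M ->
  strongly_admissible T Phi M ->
  (forall n, is_solution T Phi [set s | - tn n <= s <= tn n] (gam n)) ->
  (forall n s, - tn n <= s <= tn n -> M (gam n s)) ->
  tn @ \oo --> +oo ->
  exists (phi : nat -> nat) (g : R -> X),
    (forall m n, (m < n)%N -> (phi m < phi n)%N) /\
    is_solution T Phi setT g /\
    (forall s, M (g s)) /\
    (forall (a b : R) (V : set (R * X)),
       let J := [set s | a <= s <= b] in
       V `<=` J `*` setT ->
       nbhd_in (J `*` setT) (trace g J) V ->
       exists k0 : nat, forall k, (k0 < k)%N -> trace (gam (phi k)) J `<=` V).
Proof.
move=> hausX flow closedM [admM noexpM] gam_sol gam_M tn_oo.
have [th th_incr th_tn] := cvgry_subseq_ge tn_oo.
have [phi phi_incr [y gam_phi_cvg]] :=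
  diagonal_extraction (exhausting_subseq tn) (fun m n => gam n (- m%:R))
    (conj th_incr th_tn)
    (fun _ ex_psi => ex_psi.1) (@exhausting_subseq_comp _ tn)
    (solutions_subseq_cvg flow gam_sol gam_M admM).
exists phi, (limit_solution Phi y); split => //; split; last split.
- exact (limit_solution_is_solution flow gam_sol gam_M hausX closedM noexpM tn_oo
    phi_incr gam_phi_cvg).
- exact (limit_solution_in_M flow gam_sol gam_M closedM noexpM tn_oo
    phi_incr gam_phi_cvg).
- move=> a b V J _.
  exact (trace_gam_phi_eventually_in flow gam_sol gam_M hausX closedM noexpM tn_oo
    phi_incr gam_phi_cvg a b V).
Qed.
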